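(* If $\widetilde\alpha^{[+2]}$ is a smooth spin-$+2$-weighted function satisfying $\mathfrak T^{[+2]}\widetilde\alpha^{[+2]}=0$, then $$\big(\mathcal L^{[+2]}(\mathcal L^{[+2]}-2)-12M\partial_t\big)\widetilde\alpha^{[+2]}=w^2(w^{-1}L)(w^{-1}L)(w^{-1}\underline L)(w^{-1}\underline L)\widetilde\alpha^{[+2]}.$$ If $\widetilde\alpha^{[-2]}$ is a smooth spin-$-2$-weighted function satisfying $\mathfrak T^{[-2]}\widetilde\alpha^{[-2]}=0$, then $$\big(\mathcal L^{[-2]}(\mathcal L^{[-2]}-2)+12M\partial_t\big)\widetilde\alpha^{[-2]}=w^2(w^{-1}\underline L)(w^{-1}\underline L)(w^{-1}L)(w^{-1}L)\widetilde\alpha^{[-2]}.$$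
   Context: Fix $M>0$, $k>0$; $\Delta(r)=r^2+k^2r^4-2Mr$, $w:=\Delta/r^4$. On the Schwarzschild–AdS exterior with metric $-(1+k^2r^2-\frac{2M}{r})dt^2+(1+k^2r^2-\frac{2M}{r})^{-1}dr^2+r^2(d\vartheta^2+\sin^2\vartheta d\varphi^2)$, let $r^\star$ be given by $dr^\star/dr=r^2/\Delta$, $r^\star(\infty)=\pi/2$; $L=\partial_t+\partial_{r^\star}$, $\underline L=\partial_t-\partial_{r^\star}$, $w'=dw/dr^\star$; $(w^{-1}L)$ denotes the operator $\phi\mapsto w^{-1}L\phi$ and products denote compositions. $-\mathcal{L}^{[\pm2]}:=\frac{1}{\sin\vartheta}\partial_\vartheta(\sin\vartheta\partial_\vartheta)+\frac{1}{\sin^2\vartheta}\partial_\varphi^2\pm4i\frac{\cos\vartheta}{\sin^2\vartheta}\partial_\varphi-4\cot^2\vartheta-4$ on spin $\pm2$ functions. Teukolsky operators: $\mathfrak T^{[+2]}\phi=-L\underline L\phi+2\frac{w'}{w}\underline L\phi-w(\mathcal L^{[+2]}-2+\frac{6M}{r})\phi$, $\mathfrak T^{[-2]}\phi=-L\underline L\phi-2\frac{w'}{w}L\phi-w(\mathcal L^{[-2]}-2+\frac{6M}{r})\phi$. *)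

From Stdlib Require Import Reals List.
From Coquelicot Require Import Coquelicot.
Open Scope R_scope.

(** Functions on the Boyer–Lindquist-type chart (t, r, theta, phi) of the
    Schwarzschild–AdS exterior, complex valued (spin-weighted functions are
    represented by their component in this chart). *)
Definition SWFun := R -> R -> R -> R -> C.

Definition Delta (M k r : R) : R := r ^ 2 + k ^ 2 * r ^ 4 - 2 * M * r.
Definition wfun (M k r : R) : R := Delta M k r / r ^ 4.
(** dr*/dr = r^2/Delta, hence  d/dr* = (Delta/r^2) d/dr. *)
Definition drsdr_inv (M k r : R) : R := Delta M k r / r ^ 2.
Definition wprime (M k r : R) : R := drsdr_inv M k r * Derive (wfun M k) r.

(** The exterior region {r > r_+} (for r > 0, Delta > 0 iff r > r_+),
    with theta in the open coordinate range (0, pi). *)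
Definition exterior (M k : R) (t r th ph : R) : Prop :=
  0 < r /\ 0 < Delta M k r /\ 0 < th < PI.

(** Coordinate partial derivatives: index 0 = t, 1 = r, 2 = theta, 3 = phi. *)
Definition slice (i : nat) (F : SWFun) (t r th ph : R) : R -> C :=
  fun s => match i with
           | O => F s r th ph
           | 1%nat => F t s th ph
           | 2%nat => F t r s ph
           | _ => F t r th s
           end.
Definition coord (i : nat) (t r th ph : R) : R :=
  match i with O => t | 1%nat => r | 2%nat => th | _ => ph end.

Definition pd (i : nat) (F : SWFun) : SWFun := fun t r th ph =>
  (Derive (fun s => Re (slice i F t r th ph s)) (coord i t r th ph),
   Derive (fun s => Im (slice i F t r th ph s)) (coord i t r th ph)).

Definition ex_pd (i : nat) (F : SWFun) (t r th ph : R) : Prop :=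
  ex_derive (fun s => Re (slice i F t r th ph s)) (coord i t r th ph) /\
  ex_derive (fun s => Im (slice i F t r th ph s)) (coord i t r th ph).

Definition iter_pd (l : list nat) (F : SWFun) : SWFun := fold_right pd F l.

Definition uncurry4 (G : R -> R -> R -> R -> R) (p : R * R * R * R) : R :=
  G (fst (fst (fst p))) (snd (fst (fst p))) (snd (fst p)) (snd p).

Definition smooth_on (D : R -> R -> R -> R -> Prop) (F : SWFun) : Prop :=
  forall (l : list nat) t r th ph, D t r th ph ->
    (forall i : nat, (i < 4)%nat -> ex_pd i (iter_pd l F) t r th ph) /\
    continuous (uncurry4 (fun a b c d => Re (iter_pd l F a b c d))) (t, r, th, ph) /\
    continuous (uncurry4 (fun a b c d => Im (iter_pd l F a b c d))) (t, r, th, ph).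

Definition phi_periodic (F : SWFun) : Prop :=
  forall t r th ph, F t r th (ph + 2 * PI) = F t r th ph.

Open Scope C_scope.

(** Null vector fields L = d_t + d_{r*},  Lbar = d_t - d_{r*}. *)
Definition Lop (M k : R) (F : SWFun) : SWFun := fun t r th ph =>
  pd 0 F t r th ph + RtoC (drsdr_inv M k r) * pd 1 F t r th ph.
Definition Lbop (M k : R) (F : SWFun) : SWFun := fun t r th ph =>
  pd 0 F t r th ph - RtoC (drsdr_inv M k r) * pd 1 F t r th ph.

Definition wLop (M k : R) (F : SWFun) : SWFun := fun t r th ph =>
  RtoC (/ wfun M k r) * Lop M k F t r th ph.
Definition wLbop (M k : R) (F : SWFun) : SWFun := fun t r th ph =>
  RtoC (/ wfun M k r) * Lbop M k F t r th ph.

(** Spin-weighted angular operator  \mathcal L^{[s]}  for s = +2 (sgn = 1)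
    and s = -2 (sgn = -1):
    -\mathcal L^{[+-2]} = (1/sin) d_th (sin d_th) + (1/sin^2) d_ph^2
        +- 4 i cos/sin^2 d_ph - 4 cot^2 - 4. *)
Definition Lang (sgn : R) (F : SWFun) : SWFun := fun t r th ph =>
  - ( RtoC (/ sin th) * pd 2 (fun t' r' th' ph' => RtoC (sin th') * pd 2 F t' r' th' ph') t r th ph
      + RtoC (/ (sin th ^ 2)) * pd 3 (pd 3 F) t r th ph
      + RtoC (sgn * 4) * Ci * RtoC (cos th / sin th ^ 2) * pd 3 F t r th ph
      - RtoC (4 * (cos th / sin th) ^ 2) * F t r th ph
      - RtoC 4 * F t r th ph ).

Definition Teuk_plus (M k : R) (F : SWFun) : SWFun := fun t r th ph =>
  - Lop M k (Lbop M k F) t r th ph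
  + RtoC (2 * (wprime M k r / wfun M k r)) * Lbop M k F t r th ph
  - RtoC (wfun M k r) *
      (Lang 1 F t r th ph - RtoC 2 * F t r th ph + RtoC (6 * M / r) * F t r th ph).
Definition Teuk_minus (M k : R) (F : SWFun) : SWFun := fun t r th ph =>
  - Lop M k (Lbop M k F) t r th ph
  - RtoC (2 * (wprime M k r / wfun M k r)) * Lop M k F t r th ph
  - RtoC (wfun M k r) *
      (Lang (-1) F t r th ph - RtoC 2 * F t r th ph + RtoC (6 * M / r) * F t r th ph).

Close Scope C_scope.

(* Write A for the angular operator, g = w'/w, V = 6M/r and T for the Teukolsky expression
   of alpha.  On the exterior, every function built from alpha by L, Lb, A and multiplication by
   r^(+-1), w^(+-1), sin^(+-1) theta, cos theta is a polynomial in these coefficients and in the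
   partial derivatives of alpha; as alpha is smooth, its mixed partials commute, so such functions
   are symbolic expressions that can be differentiated symbolically.  For s = +2, with
   y = -w^(-1) (Lb + g) T,

     A (A - 2) alpha + w^(-1) [(A - V) T + (L - 2 g) y]
       = w^2 (w^(-1) L)^2 (w^(-1) Lb)^2 alpha + 12 M d_t alpha

   is an identity of rational functions of r, w, sin theta, cos theta and the jets of alpha, in
   which w only enters through dw/dr = -2/r^3 + 6M/r^4.  Since T vanishes
   together with its derivatives, the theorem follows.  For s = -2 the same computation is done
   with (L, Lb) replaced by (-Lb, -L), which reverses the sign of the d_t term. *)

From Stdlib Require Import Reals List Lra Lia Permutation.
From Coquelicot Require Import Coquelicot.
Open Scope R_scope.

Definition is_derive_C (f : R -> C) (x : R) (df : C) : Prop :=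
  is_derive (fun s => Re (f s)) x (Re df) /\ is_derive (fun s => Im (f s)) x (Im df).

Lemma is_derive_C_ext f g x df :
  (forall s, f s = g s) -> is_derive_C f x df -> is_derive_C g x df.
Proof.
  intros Hfg [Hre Him].
  split; (eapply is_derive_ext; [| eassumption]); intros s; cbv beta; now rewrite Hfg.
Qed.

Lemma is_derive_C_const (c : C) x : is_derive_C (fun _ => c) x 0.
Proof. split; exact (is_derive_const _ _). Qed.

Lemma is_derive_C_RtoC g x dg (dc : C) :
  is_derive g x dg -> RtoC dg = dc -> is_derive_C (fun s => RtoC (g s)) x dc.
Proof. intros Hg <-; split; [exact Hg | exact (is_derive_const _ _)]. Qed.

Lemma is_derive_C_plus f g x df dg :
  is_derive_C f x df -> is_derive_C g x dg ->
  is_derive_C (fun s => f s + g s)%C x (df + dg)%C.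
Proof.
  intros [Hf1 Hf2] [Hg1 Hg2].
  split; [exact (is_derive_plus _ _ _ _ _ Hf1 Hg1) | exact (is_derive_plus _ _ _ _ _ Hf2 Hg2)].
Qed.

Lemma is_derive_C_opp f x df :
  is_derive_C f x df -> is_derive_C (fun s => - f s)%C x (- df)%C.
Proof.
  intros [Hf1 Hf2]; split; [exact (is_derive_opp _ _ _ Hf1) | exact (is_derive_opp _ _ _ Hf2)].
Qed.

Lemma is_derive_C_mult f g x df dg :
  is_derive_C f x df -> is_derive_C g x dg ->
  is_derive_C (fun s => f s * g s)%C x (df * g x + f x * dg)%C.
Proof.
  intros [Hf1 Hf2] [Hg1 Hg2].
  assert (Hmult := fun f g df dg Hf Hg =>
    is_derive_mult (K := R_AbsRing) f g x df dg Hf Hg Rmult_comm).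
  split.
  - replace (Re (df * g x + f x * dg)%C)
      with (Re df * Re (g x) + Re (f x) * Re dg - (Im df * Im (g x) + Im (f x) * Im dg))
      by (unfold Re, Im; simpl; ring).
    exact (is_derive_minus _ _ _ _ _ (Hmult _ _ _ _ Hf1 Hg1) (Hmult _ _ _ _ Hf2 Hg2)).
  - replace (Im (df * g x + f x * dg)%C)
      with (Re df * Im (g x) + Re (f x) * Im dg + (Im df * Re (g x) + Im (f x) * Re dg))
      by (unfold Re, Im; simpl; ring).
    exact (is_derive_plus _ _ _ _ _ (Hmult _ _ _ _ Hf1 Hg2) (Hmult _ _ _ _ Hf2 Hg1)).
Qed.

Lemma pd_of_is_derive_C i F t r th ph df :
  is_derive_C (slice i F t r th ph) (coord i t r th ph) df -> pd i F t r th ph = df.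
Proof.
  intros [Hre Him]; destruct df as [u v]; unfold pd.
  f_equal; now apply is_derive_unique.
Qed.

Lemma is_derive_C_pd i F t r th ph :
  ex_pd i F t r th ph ->
  is_derive_C (slice i F t r th ph) (coord i t r th ph) (pd i F t r th ph).
Proof. intros [Hre Him]; split; now apply Derive_correct. Qed.

Lemma slice_coord i F t r th ph : slice i F t r th ph (coord i t r th ph) = F t r th ph.
Proof. now destruct i as [|[|[|i]]]. Qed.

Lemma iter_pd_app l1 l2 F : iter_pd (l1 ++ l2) F = iter_pd l1 (iter_pd l2 F).
Proof. apply fold_right_app. Qed.

Lemma smooth_on_iter_pd D F l : smooth_on D F -> smooth_on D (iter_pd l F).
Proof. intros HF l' t r th ph HD; rewrite <- iter_pd_app; now apply HF. Qed.

Lemma Rabs_diag_lt (x : R) (d : posreal) : Rabs (x - x) < d.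
Proof. rewrite Rminus_diag, Rabs_R0; apply cond_pos. Qed.

Lemma Schwarz_C (G : R -> R -> C) x y (P : R -> R -> Prop) :
  locally_2d P x y ->
  (forall u v, P u v ->
     ex_derive (fun z => Re (G z v)) u /\ ex_derive (fun z => Im (G z v)) u /\
     ex_derive (fun z => Re (G u z)) v /\ ex_derive (fun z => Im (G u z)) v /\
     ex_derive (fun z => Derive (fun w => Re (G z w)) v) u /\
     ex_derive (fun z => Derive (fun w => Im (G z w)) v) u /\
     ex_derive (fun z => Derive (fun w => Re (G w z)) u) v /\
     ex_derive (fun z => Derive (fun w => Im (G w z)) u) v) ->
  continuity_2d_pt (fun u v => Derive (fun z => Derive (fun w => Re (G z w)) v) u) x y ->
  continuity_2d_pt (fun u v => Derive (fun z => Derive (fun w => Im (G z w)) v) u) x y ->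
  continuity_2d_pt (fun u v => Derive (fun z => Derive (fun w => Re (G w z)) u) v) x y ->
  continuity_2d_pt (fun u v => Derive (fun z => Derive (fun w => Im (G w z)) u) v) x y ->
  (Derive (fun z => Derive (fun w => Re (G z w)) y) x,
   Derive (fun z => Derive (fun w => Im (G z w)) y) x) =
  (Derive (fun z => Derive (fun w => Re (G w z)) x) y,
   Derive (fun z => Derive (fun w => Im (G w z)) x) y).
Proof.
  intros HP Hd Hre1 Him1 Hre2 Him2.
  f_equal; apply Schwarz; try assumption;
    (eapply locally_2d_impl; [| exact HP]); apply locally_2d_forall;
    intros u v Huv; destruct (Hd u v Huv) as (? & ? & ? & ? & ? & ? & ? & ?); tauto.
Qed.

Lemma continuity_2d_pt_comp (h : R -> R -> R -> R -> R) (emb : R -> R -> R * R * R * R)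
  x y :
  (forall (eps : posreal) u v, ball (x, y) eps (u, v) -> ball (emb x y) eps (emb u v)) ->
  continuous (uncurry4 h) (emb x y) ->
  continuity_2d_pt (fun u v => uncurry4 h (emb u v)) x y.
Proof.
  intros Hemb Hh; apply continuity_2d_pt_filterlim.
  apply (filterlim_comp _ _ _ (fun z => emb (fst z) (snd z)) (uncurry4 h) _
           (locally (emb x y)) _); [| exact Hh].
  intros Q [eps HQ]; exists eps; intros [u v] Huv; apply HQ, Hemb, Huv.
Qed.

Section Exterior.
Variables M k : R.

Definition exterior_eq (F G : SWFun) : Prop :=
  forall t r th ph, exterior M k t r th ph -> F t r th ph = G t r th ph.

Lemma exterior_nonzero t r th ph :
  exterior M k t r th ph -> 0 < r /\ 0 < wfun M k r /\ sin th <> 0.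
Proof.
  intros (Hr & HD & Hth); repeat split; try assumption.
  - apply Rdiv_lt_0_compat; [exact HD | now apply pow_lt].
  - apply Rgt_not_eq, sin_gt_0; apply Hth.
Qed.

Lemma exterior_nbhd t r th ph : exterior M k t r th ph ->
  exists d : posreal, forall t' r' th' ph',
    Rabs (r' - r) < d -> Rabs (th' - th) < d -> exterior M k t' r' th' ph'.
Proof.
  intros (Hr & HD & Hth0 & HthPI).
  assert (HDc : continuous (Delta M k) r).
  { apply (ex_derive_continuous (V := R_NormedModule)); unfold Delta; auto_derive; auto. }
  destruct (filter_and _ _ (open_gt 0 r Hr) (HDc _ (open_gt 0 _ HD))) as [d1 H1].
  destruct (filter_and _ _ (open_gt 0 th Hth0) (open_lt PI th HthPI)) as [d2 H2].
  exists (mkposreal _ (Rmin_pos _ _ (cond_pos d1) (cond_pos d2))); simpl.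
  intros t' r' th' ph' Hr' Hth'.
  destruct (H1 r') as [Hr'0 HD']; [exact (Rlt_le_trans _ _ _ Hr' (Rmin_l _ _)) |].
  destruct (H2 th') as [Hth'0 Hth'PI]; [exact (Rlt_le_trans _ _ _ Hth' (Rmin_r _ _)) |].
  repeat split; assumption.
Qed.

Lemma slice_eq_locally F G i t r th ph : exterior_eq F G -> exterior M k t r th ph ->
  locally (coord i t r th ph) (fun s => slice i F t r th ph s = slice i G t r th ph s).
Proof.
  intros HFG HE; destruct (exterior_nbhd _ _ _ _ HE) as [d Hd]; exists d; intros s Hs.
  destruct i as [|[|[|i]]]; apply HFG, Hd; first [exact Hs | apply Rabs_diag_lt].
Qed.

Lemma pd_exterior_eq i F G : exterior_eq F G -> exterior_eq (pd i F) (pd i G).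
Proof.
  intros HFG t r th ph HE; unfold pd.
  assert (Hloc := slice_eq_locally F G i t r th ph HFG HE).
  f_equal; apply Derive_ext_loc; eapply filter_imp; try exact Hloc;
    intros s Hs; cbv beta; now rewrite Hs.
Qed.

Ltac mixed_partials_commute F d Hd Hex Hcont G x y emb i j :=
  refine (Schwarz_C G x y (fun u v => let '(a, b, c, e) := emb u v in exterior M k a b c e)
            _ _ _ _ _ _);
  [ exists d; intros u v Hu Hv; cbn; apply Hd; first [exact Hu | exact Hv | apply Rabs_diag_lt]
  | intros u v Hp; cbn in Hp;
    destruct (Hex nil _ _ _ _ Hp i ltac:(lia)), (Hex nil _ _ _ _ Hp j ltac:(lia)),
      (Hex (j :: nil) _ _ _ _ Hp i ltac:(lia)), (Hex (i :: nil) _ _ _ _ Hp j ltac:(lia));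
    repeat split; assumption
  | .. ];
  [ refine (continuity_2d_pt_comp _ emb x y _ (proj1 (Hcont (i :: j :: nil))))
  | refine (continuity_2d_pt_comp _ emb x y _ (proj2 (Hcont (i :: j :: nil))))
  | refine (continuity_2d_pt_comp _ emb x y _ (proj1 (Hcont (j :: i :: nil))))
  | refine (continuity_2d_pt_comp _ emb x y _ (proj2 (Hcont (j :: i :: nil)))) ];
  intros eps u v [Hu Hv]; repeat split; try assumption; apply ball_center.

Lemma pd_comm_lt F i j t r th ph : smooth_on (exterior M k) F -> exterior M k t r th ph ->
  (i < j)%nat -> (i < 3)%nat -> pd i (pd j F) t r th ph = pd j (pd i F) t r th ph.
Proof.
  intros HF HE Hij Hi.
  destruct (exterior_nbhd _ _ _ _ HE) as [d Hd].
  assert (Hex : forall l t' r' th' ph', exterior M k t' r' th' ph' ->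
            forall n, (n < 4)%nat -> ex_pd n (iter_pd l F) t' r' th' ph')
    by (intros; now apply HF).
  assert (Hcont : forall l,
            continuous (uncurry4 (fun a b c e => Re (iter_pd l F a b c e))) (t, r, th, ph) /\
            continuous (uncurry4 (fun a b c e => Im (iter_pd l F a b c e))) (t, r, th, ph))
    by (intros l; apply HF, HE).
  destruct i as [|[|[|i]]], j as [|[|[|j]]]; try lia.
  - mixed_partials_commute F d Hd Hex Hcont (fun u v => F u v th ph) t r
      (fun u v : R => (u, v, th, ph)) 0%nat 1%nat.
  - mixed_partials_commute F d Hd Hex Hcont (fun u v => F u r v ph) t th
      (fun u v : R => (u, r, v, ph)) 0%nat 2%nat.
  - mixed_partials_commute F d Hd Hex Hcont (fun u v => F u r th v) t ph
      (fun u v : R => (u, r, th, v)) 0%nat 3%nat.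
  - mixed_partials_commute F d Hd Hex Hcont (fun u v => F t u v ph) r th
      (fun u v : R => (t, u, v, ph)) 1%nat 2%nat.
  - mixed_partials_commute F d Hd Hex Hcont (fun u v => F t u th v) r ph
      (fun u v : R => (t, u, th, v)) 1%nat 3%nat.
  - mixed_partials_commute F d Hd Hex Hcont (fun u v => F t r u v) th ph
      (fun u v : R => (t, r, u, v)) 2%nat 3%nat.
Qed.

Lemma pd_comm F i j t r th ph : smooth_on (exterior M k) F -> exterior M k t r th ph ->
  pd i (pd j F) t r th ph = pd j (pd i F) t r th ph.
Proof.
  intros HF HE.
  destruct (Nat.lt_trichotomy i j) as [Hij | [-> | Hji]]; [| reflexivity |].
  - destruct (Nat.lt_ge_cases i 3); [now apply pd_comm_lt |].
    (* all indices >= 3 denote the phi-derivative *)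
    now destruct i as [|[|[|i]]], j as [|[|[|j]]]; try lia.
  - destruct (Nat.lt_ge_cases j 3); [symmetry; now apply pd_comm_lt |].
    now destruct i as [|[|[|i]]], j as [|[|[|j]]]; try lia.
Qed.

Lemma iter_pd_perm F l l' : smooth_on (exterior M k) F -> Permutation l l' ->
  exterior_eq (iter_pd l F) (iter_pd l' F).
Proof.
  intros HF Hll'; induction Hll' as [| i l l' _ IH | i j l | l l' l'' _ IH1 _ IH2].
  - now intros t r th ph _.
  - now apply pd_exterior_eq.
  - intros t r th ph HE; apply pd_comm; [now apply smooth_on_iter_pd | exact HE].
  - intros t r th ph HE; now rewrite IH1, IH2.
Qed.

End Exterior.

Inductive expr : Type :=
  | Zero
  | Cst (c : C)
  | Rcoord | InvR | Wfun | InvW | Sin | Cos | InvSin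
  | Jet (l : list nat)
  | Add (e1 e2 : expr)
  | Mul (e1 e2 : expr)
  | Opp (e : expr).

Definition add (e1 e2 : expr) : expr :=
  match e1, e2 with Zero, _ => e2 | _, Zero => e1 | _, _ => Add e1 e2 end.
Definition mul (e1 e2 : expr) : expr :=
  match e1, e2 with Zero, _ | _, Zero => Zero | _, _ => Mul e1 e2 end.
Definition opp (e : expr) : expr := match e with Zero => Zero | _ => Opp e end.

(* Jets are indexed by sorted lists, so that equal partial derivatives of alpha are
   syntactically equal atoms for [field]. *)
Fixpoint insert (i : nat) (l : list nat) : list nat :=
  match l with
  | nil => i :: nil
  | j :: l' => if Nat.leb i j then i :: l else j :: insert i l'
  end.

Lemma Permutation_insert i l : Permutation (i :: l) (insert i l).
Proof.
  induction l as [| j l IH]; simpl; [reflexivity |].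
  destruct (Nat.leb i j); [reflexivity |].
  now rewrite perm_swap, IH.
Qed.

Definition on_coord (j i : nat) (e : expr) : expr := if Nat.eqb i j then e else Zero.

Definition sgn (b : bool) : R := if b then 1 else -1.
Definition wnullop (M k : R) (b : bool) : SWFun -> SWFun := if b then wLop M k else wLbop M k.
Definition teuk (M k : R) (b : bool) : SWFun -> SWFun :=
  if b then Teuk_plus M k else Teuk_minus M k.

Section Expressions.
Variables (M k : R) (a : SWFun).
Hypothesis Ha : smooth_on (exterior M k) a.

Fixpoint eval (e : expr) : SWFun := fun t r th ph =>
  match e with
  | Zero => 0
  | Cst c => c
  | Rcoord => RtoC r
  | InvR => RtoC (/ r)
  | Wfun => RtoC (wfun M k r)
  | InvW => RtoC (/ wfun M k r)
  | Sin => RtoC (sin th)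
  | Cos => RtoC (cos th)
  | InvSin => RtoC (/ sin th)
  | Jet l => iter_pd l a t r th ph
  | Add e1 e2 => eval e1 t r th ph + eval e2 t r th ph
  | Mul e1 e2 => eval e1 t r th ph * eval e2 t r th ph
  | Opp e => - eval e t r th ph
  end%C.

Lemma eval_add e1 e2 t r th ph :
  eval (add e1 e2) t r th ph = (eval e1 t r th ph + eval e2 t r th ph)%C.
Proof. destruct e1, e2; simpl; ring. Qed.

Lemma eval_mul e1 e2 t r th ph :
  eval (mul e1 e2) t r th ph = (eval e1 t r th ph * eval e2 t r th ph)%C.
Proof. destruct e1, e2; simpl; ring. Qed.

Lemma eval_opp e t r th ph : eval (opp e) t r th ph = (- eval e t r th ph)%C.
Proof. destruct e; simpl; ring. Qed.

Ltac push_eval := repeat first [rewrite eval_add | rewrite eval_mul | rewrite eval_opp].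

Definition dwdr_expr : expr :=
  Add (Mul (Cst (-2)) (Mul InvR (Mul InvR InvR)))
      (Mul (Cst 6) (Mul (Cst M) (Mul InvR (Mul InvR (Mul InvR InvR))))).

Fixpoint deriv (i : nat) (e : expr) : expr :=
  match e with
  | Zero | Cst _ => Zero
  | Rcoord => on_coord 1 i (Cst 1)
  | InvR => on_coord 1 i (Opp (Mul InvR InvR))
  | Wfun => on_coord 1 i dwdr_expr
  | InvW => on_coord 1 i (Opp (Mul (Mul InvW InvW) dwdr_expr))
  | Sin => on_coord 2 i Cos
  | Cos => on_coord 2 i (Opp Sin)
  | InvSin => on_coord 2 i (Opp (Mul (Mul InvSin InvSin) Cos))
  | Jet l => Jet (insert i l)
  | Add e1 e2 => add (deriv i e1) (deriv i e2)
  | Mul e1 e2 => add (mul (deriv i e1) e2) (mul e1 (deriv i e2))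
  | Opp e => opp (deriv i e)
  end.

Lemma is_derive_wfun r : r <> 0 -> is_derive (wfun M k) r (-2 / r ^ 3 + 6 * M / r ^ 4).
Proof.
  intros Hr; unfold wfun, Delta; auto_derive; [| field; exact Hr].
  repeat (apply Rmult_integral_contrapositive_currified; [exact Hr |]); lra.
Qed.

Ltac real_value :=
  repeat first [rewrite <- RtoC_mult | rewrite <- RtoC_opp | rewrite <- RtoC_plus];
  f_equal; field.

Lemma is_derive_C_eval e i t r th ph :
  (i < 4)%nat -> exterior M k t r th ph ->
  is_derive_C (slice i (eval e) t r th ph) (coord i t r th ph) (eval (deriv i e) t r th ph).
Proof.
  intros Hi HE; destruct (exterior_nonzero M k _ _ _ _ HE) as (Hr & Hw & Hs).
  assert (Hw' : wfun M k r <> 0) by lra.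
  induction e as [| c | | | | | | | | l | e1 IH1 e2 IH2 | e1 IH1 e2 IH2 | e IH];
    try (destruct i as [|[|[|i]]]; simpl; try apply is_derive_C_const; [idtac]).
  1, 2: now destruct i as [|[|[|i]]]; apply is_derive_C_const.
  - eapply is_derive_C_RtoC; [apply is_derive_id | reflexivity].
  - apply is_derive_C_RtoC with (- (/ r * / r)); [auto_derive; [lra | field; lra] |].
    now rewrite RtoC_opp, RtoC_mult.
  - eapply is_derive_C_RtoC; [apply is_derive_wfun; lra |]. real_value; lra.
  - eapply is_derive_C_RtoC; [apply is_derive_inv; [apply is_derive_wfun; lra | exact Hw'] |].
    real_value; lra.
  - eapply is_derive_C_RtoC; [apply is_derive_Reals, derivable_pt_lim_sin | reflexivity].
  - eapply is_derive_C_RtoC; [apply is_derive_Reals, derivable_pt_lim_cos | apply RtoC_opp].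
  - eapply is_derive_C_RtoC;
      [apply (is_derive_inv sin); [apply is_derive_Reals, derivable_pt_lim_sin | exact Hs] |].
    real_value; exact Hs.
  - cbn [eval deriv].
    rewrite <- (iter_pd_perm M k a (i :: l) (insert i l) Ha (Permutation_insert i l) t r th ph HE).
    apply is_derive_C_pd, (smooth_on_iter_pd _ _ l Ha nil t r th ph HE), Hi.
  - cbn [deriv]; rewrite eval_add.
    eapply is_derive_C_ext; [| exact (is_derive_C_plus _ _ _ _ _ IH1 IH2)].
    intros s; now destruct i as [|[|[|i]]].
  - cbn [deriv]; rewrite eval_add, !eval_mul.
    pose proof (is_derive_C_mult _ _ _ _ _ IH1 IH2) as H; rewrite !slice_coord in H.
    eapply is_derive_C_ext; [| exact H].
    intros s; now destruct i as [|[|[|i]]].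
  - cbn [deriv]; rewrite eval_opp.
    eapply is_derive_C_ext; [| exact (is_derive_C_opp _ _ _ IH)].
    intros s; now destruct i as [|[|[|i]]].
Qed.

Lemma pd_eval e i t r th ph :
  (i < 4)%nat -> exterior M k t r th ph ->
  pd i (eval e) t r th ph = eval (deriv i e) t r th ph.
Proof. intros; now apply pd_of_is_derive_C, is_derive_C_eval. Qed.

Definition represents (F : SWFun) (e : expr) : Prop := exterior_eq M k F (eval e).

Definition vanishes (e : expr) : Prop := represents (fun _ _ _ _ => 0%C) e.

Lemma represents_pd F e i : (i < 4)%nat ->
  represents F e -> represents (pd i F) (deriv i e).
Proof.
  intros Hi HFe t r th ph HE.
  rewrite (pd_exterior_eq M k i F (eval e) HFe t r th ph HE); now apply pd_eval.
Qed.

Lemma vanishes_deriv e i : (i < 4)%nat ->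
  vanishes e -> vanishes (deriv i e).
Proof.
  intros Hi He t r th ph HE; rewrite <- (represents_pd _ e i Hi He t r th ph HE).
  unfold pd; destruct i as [|[|[|i]]]; simpl; now rewrite !Derive_const.
Qed.

Lemma vanishes_add e1 e2 : vanishes e1 -> vanishes e2 -> vanishes (add e1 e2).
Proof. intros H1 H2 t r th ph HE; rewrite eval_add, <- H1, <- H2 by exact HE; ring. Qed.

Lemma vanishes_mul e1 e2 : vanishes e2 -> vanishes (mul e1 e2).
Proof. intros H2 t r th ph HE; rewrite eval_mul, <- H2 by exact HE; ring. Qed.

Lemma vanishes_opp e : vanishes e -> vanishes (opp e).
Proof. intros H t r th ph HE; rewrite eval_opp, <- H by exact HE; ring. Qed.

Definition drsdr_inv_expr : expr := Mul Wfun (Mul Rcoord Rcoord).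
Definition wprime_over_w_expr : expr :=
  Add (Mul (Cst (-2)) InvR) (Mul (Cst 6) (Mul (Cst M) (Mul InvR InvR))).
Definition sixM_over_r_expr : expr := Mul (Cst 6) (Mul (Cst M) InvR).

Lemma eval_drsdr_inv_expr t r th ph :
  r <> 0 -> eval drsdr_inv_expr t r th ph = RtoC (drsdr_inv M k r).
Proof.
  intros Hr; cbn [eval drsdr_inv_expr]; rewrite <- !RtoC_mult; f_equal.
  unfold wfun, drsdr_inv; field; exact Hr.
Qed.

Lemma eval_wprime_over_w_expr t r th ph : r <> 0 -> wfun M k r <> 0 ->
  RtoC (wprime M k r / wfun M k r) = eval wprime_over_w_expr t r th ph.
Proof.
  intros Hr Hw; unfold wprime; rewrite (is_derive_unique _ _ _ (is_derive_wfun r Hr)).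
  replace (drsdr_inv M k r) with (wfun M k r * r ^ 2) by (unfold drsdr_inv, wfun; field; exact Hr).
  cbn [eval wprime_over_w_expr]; real_value; auto.
Qed.

Lemma eval_sixM_over_r_expr t r th ph :
  r <> 0 -> RtoC (6 * M / r) = eval sixM_over_r_expr t r th ph.
Proof. intros Hr; cbn [eval sixM_over_r_expr]; real_value; exact Hr. Qed.

Definition null_expr (b : bool) (e : expr) : expr :=
  add (deriv 0 e) (mul (Mul (Cst (sgn b)) drsdr_inv_expr) (deriv 1 e)).

Lemma represents_null F e b : represents F e ->
  represents
    (fun t r th ph => pd 0 F t r th ph + RtoC (sgn b * drsdr_inv M k r) * pd 1 F t r th ph)%C
    (null_expr b e).
Proof.
  intros HF t r th ph HE; destruct (exterior_nonzero M k _ _ _ _ HE) as (Hr & _).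
  unfold null_expr; rewrite eval_add, eval_mul; cbn [eval].
  rewrite eval_drsdr_inv_expr, (represents_pd F e 0), (represents_pd F e 1), RtoC_mult
    by (lia || lra || auto).
  ring.
Qed.

Lemma represents_Lop F e : represents F e -> represents (Lop M k F) (null_expr true e).
Proof.
  intros HF t r th ph HE; rewrite <- (represents_null F e true HF t r th ph HE).
  unfold Lop, sgn; now rewrite Rmult_1_l.
Qed.

Lemma represents_Lbop F e : represents F e -> represents (Lbop M k F) (null_expr false e).
Proof.
  intros HF t r th ph HE; rewrite <- (represents_null F e false HF t r th ph HE).
  unfold Lbop, sgn; rewrite RtoC_mult; ring.
Qed.

Definition wnull_expr (b : bool) (e : expr) : expr := mul InvW (null_expr b e).

Lemma represents_wnullop b F e :
  represents F e -> represents (wnullop M k b F) (wnull_expr b e).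
Proof.
  intros HF t r th ph HE; unfold wnull_expr; rewrite eval_mul; destruct b.
  - now rewrite <- (represents_Lop F e HF t r th ph HE).
  - now rewrite <- (represents_Lbop F e HF t r th ph HE).
Qed.

Definition ang_expr (s : R) (e : expr) : expr :=
  opp (add (add (add (add
    (mul InvSin (deriv 2 (mul Sin (deriv 2 e))))
    (mul (Mul InvSin InvSin) (deriv 3 (deriv 3 e))))
    (mul (Mul (Mul (Cst s) (Cst 4)) (Mul (Cst Ci) (Mul Cos (Mul InvSin InvSin)))) (deriv 3 e)))
    (opp (mul (Mul (Cst 4) (Mul (Mul Cos InvSin) (Mul Cos InvSin))) e)))
    (opp (mul (Cst 4) e))).

Lemma represents_Lang s F e : represents F e -> represents (Lang s F) (ang_expr s e).
Proof.
  intros HF t r th ph HE.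
  assert (Hsin : represents (fun t' r' th' ph' => RtoC (sin th') * pd 2 F t' r' th' ph')%C
                   (mul Sin (deriv 2 e))).
  { intros t' r' th' ph' HE'; rewrite eval_mul, (represents_pd F e 2) by (lia || auto).
    reflexivity. }
  unfold Lang, ang_expr.
  rewrite (represents_pd _ _ 2 ltac:(lia) Hsin t r th ph HE),
    (represents_pd _ _ 3 ltac:(lia) (represents_pd F e 3 ltac:(lia) HF) t r th ph HE),
    (represents_pd F e 3 ltac:(lia) HF t r th ph HE), (HF t r th ph HE).
  push_eval; cbn [eval].
  simpl pow; unfold Rdiv; rewrite ?Rmult_1_r, ?Rinv_mult, ?RtoC_mult; ring.
Qed.

Definition teuk_expr (b : bool) (e : expr) : expr :=
  add (add (opp (null_expr true (null_expr false e)))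
           (mul (Mul (Cst 2) (Mul (Cst (sgn b)) wprime_over_w_expr)) (null_expr (negb b) e)))
      (opp (mul Wfun (add (add (ang_expr (sgn b) e) (mul (Cst (-2)) e)) (mul sixM_over_r_expr e)))).

Lemma represents_teuk b F e : represents F e -> represents (teuk M k b F) (teuk_expr b e).
Proof.
  intros HF t r th ph HE; destruct (exterior_nonzero M k _ _ _ _ HE) as (Hr & Hw & _).
  unfold teuk_expr; push_eval; cbn [eval].
  rewrite <- (eval_wprime_over_w_expr t r th ph), <- (eval_sixM_over_r_expr t r th ph),
    <- (HF t r th ph HE), <- (represents_Lang (sgn b) F e HF t r th ph HE) by lra.
  destruct b; cbn [teuk sgn negb]; [unfold Teuk_plus | unfold Teuk_minus].
  - rewrite <- (represents_Lop _ _ (represents_Lbop F e HF) t r th ph HE),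
      <- (represents_Lbop F e HF t r th ph HE), RtoC_mult.
    ring.
  - rewrite <- (represents_Lop _ _ (represents_Lbop F e HF) t r th ph HE),
      <- (represents_Lop F e HF t r th ph HE), RtoC_mult.
    ring.
Qed.

Definition ts_certificate (b : bool) (T : expr) : expr :=
  let y := opp (mul InvW (add (mul (Cst (sgn b)) (null_expr (negb b) T))
                              (mul wprime_over_w_expr T))) in
  mul InvW (add (add (ang_expr (sgn b) T) (opp (mul sixM_over_r_expr T)))
                (add (mul (Cst (sgn b)) (null_expr b y))
                     (opp (mul (Mul (Cst 2) wprime_over_w_expr) y)))).

Lemma vanishes_ts_certificate b T : vanishes T -> vanishes (ts_certificate b T).
Proof.
  intros HT; unfold ts_certificate, null_expr, ang_expr; cbv zeta.
  repeat first [ apply vanishes_add | apply vanishes_mul | apply vanishes_opp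
               | apply vanishes_deriv; [lia |] | exact HT ].
Qed.

Definition ts_lhs (b : bool) : expr :=
  ang_expr (sgn b) (add (ang_expr (sgn b) (Jet nil)) (mul (Cst (-2)) (Jet nil))).

Definition ts_rhs (b : bool) : expr :=
  add (mul (Mul Wfun Wfun)
           (wnull_expr b (wnull_expr b (wnull_expr (negb b) (wnull_expr (negb b) (Jet nil))))))
      (mul (Mul (Cst (sgn b)) (Mul (Cst 12) (Cst M))) (Jet (0%nat :: nil))).

Lemma ts_identity b t r th ph : r <> 0 -> wfun M k r <> 0 -> sin th <> 0 ->
  (eval (ts_lhs b) t r th ph + eval (ts_certificate b (teuk_expr b (Jet nil))) t r th ph)%C =
  eval (ts_rhs b) t r th ph.
Proof.
  intros Hr Hw Hs.
  assert (Hr' : RtoC r <> RtoC 0) by (intros H; apply Hr, RtoC_inj, H).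
  assert (Hw' : RtoC (wfun M k r) <> RtoC 0) by (intros H; apply Hw, RtoC_inj, H).
  assert (Hs' : RtoC (sin th) <> RtoC 0) by (intros H; apply Hs, RtoC_inj, H).
  destruct b; cbv [ts_lhs ts_rhs ts_certificate teuk_expr wnull_expr null_expr ang_expr
    drsdr_inv_expr wprime_over_w_expr sixM_over_r_expr dwdr_expr deriv insert on_coord
    add mul opp sgn negb Nat.eqb Nat.leb eval];
    rewrite !(RtoC_inv r), !(RtoC_inv (wfun M k r)), !(RtoC_inv (sin th)) by assumption;
    field; auto.
Qed.

Lemma teukolsky_starobinsky b :
  (forall t r th ph, exterior M k t r th ph -> teuk M k b a t r th ph = 0%C) ->
  forall t r th ph, exterior M k t r th ph ->
  Lang (sgn b) (fun t' r' th' ph' => Lang (sgn b) a t' r' th' ph' - RtoC 2 * a t' r' th' ph')%C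
    t r th ph =
  (RtoC (wfun M k r ^ 2) *
     wnullop M k b (wnullop M k b (wnullop M k (negb b) (wnullop M k (negb b) a))) t r th ph
   + RtoC (sgn b) * RtoC (12 * M) * pd 0 a t r th ph)%C.
Proof.
  intros HT t r th ph HE; destruct (exterior_nonzero M k _ _ _ _ HE) as (Hr & Hw & Hs).
  assert (Ha0 : represents a (Jet nil)) by now intros ? ? ? ? ?.
  assert (HT0 : vanishes (teuk_expr b (Jet nil))).
  { intros t' r' th' ph' HE'.
    rewrite <- (represents_teuk b a _ Ha0 t' r' th' ph' HE'); symmetry; now apply HT. }
  assert (Hin : represents
                  (fun t' r' th' ph' => Lang (sgn b) a t' r' th' ph' - RtoC 2 * a t' r' th' ph')%C
                  (add (ang_expr (sgn b) (Jet nil)) (mul (Cst (-2)) (Jet nil)))).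
  { intros t' r' th' ph' HE'.
    rewrite eval_add, eval_mul, <- (represents_Lang _ _ _ Ha0 t' r' th' ph' HE'); simpl; ring. }
  assert (Hid := ts_identity b t r th ph ltac:(lra) ltac:(lra) Hs).
  rewrite <- (vanishes_ts_certificate b _ HT0 t r th ph HE) in Hid.
  unfold ts_lhs, ts_rhs in Hid; rewrite Cplus_0_r, eval_add, !eval_mul in Hid; cbn [eval] in Hid.
  rewrite (represents_Lang _ _ _ Hin t r th ph HE), Hid, (represents_wnullop b _ _
    (represents_wnullop b _ _
      (represents_wnullop (negb b) _ _ (represents_wnullop (negb b) _ _ Ha0)))
    t r th ph HE), RtoC_pow, RtoC_mult.
  change (pd 0 a t r th ph) with (iter_pd (0%nat :: nil) a t r th ph); ring.
Qed.

End Expressions.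

Theorem lemma2p9 (M k : R) (HM : 0 < M) (Hk : 0 < k) :
  (forall a : SWFun,
     smooth_on (exterior M k) a -> phi_periodic a ->
     (forall t r th ph, exterior M k t r th ph -> Teuk_plus M k a t r th ph = RtoC 0) ->
     forall t r th ph, exterior M k t r th ph ->
       (Lang 1 (fun t' r' th' ph' => (Lang 1 a t' r' th' ph' - RtoC 2 * a t' r' th' ph')%C)
          t r th ph
        - RtoC (12 * M) * pd 0 a t r th ph)%C
       = (RtoC (wfun M k r ^ 2) *
          wLop M k (wLop M k (wLbop M k (wLbop M k a))) t r th ph)%C)
  /\
  (forall a : SWFun,
     smooth_on (exterior M k) a -> phi_periodic a ->
     (forall t r th ph, exterior M k t r th ph -> Teuk_minus M k a t r th ph = RtoC 0) ->
     forall t r th ph, exterior M k t r th ph ->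
       (Lang (-1) (fun t' r' th' ph' => (Lang (-1) a t' r' th' ph' - RtoC 2 * a t' r' th' ph')%C)
          t r th ph
        + RtoC (12 * M) * pd 0 a t r th ph)%C
       = (RtoC (wfun M k r ^ 2) *
          wLbop M k (wLbop M k (wLop M k (wLop M k a))) t r th ph)%C).
Proof.
  split; intros a Ha _ HT t r th ph HE.
  - pose proof (teukolsky_starobinsky M k a Ha true HT t r th ph HE) as Hts.
    cbn [sgn negb wnullop] in Hts; rewrite Hts; ring.
  - pose proof (teukolsky_starobinsky M k a Ha false HT t r th ph HE) as Hts.
    cbn [sgn negb wnullop] in Hts; rewrite Hts; ring.
Qed.
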